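(* For every finite input set $F\subset(K[x_1])[\tilde{\bm{x}}]\setminus K$, every run of the pseudo-eliminant algorithm described in the context terminates after finitely many steps.
   Context: $K$ is a field; $K[x_1,\dots,x_n]$ is regarded as $(K[x_1])[\tilde{\bm{x}}]$, $\tilde{\bm{x}}=(x_2,\dots,x_n)$, with a fixed monomial ordering $\succ$ on monomials in $\tilde{\bm{x}}$. For nonzero $f=\sum c_\alpha\tilde{\bm{x}}^\alpha$ ($c_\alpha\in K[x_1]$), $\operatorname{supp}f$ is the set of $\tilde{\bm{x}}^\alpha$ with $c_\alpha\ne0$, $\operatorname{lm}(f)$ its $\succ$-largest element, $\operatorname{lc}(f)\in K[x_1]$ its coefficient, $\operatorname{lt}(f)=\operatorname{lc}(f)\operatorname{lm}(f)$. Gcds in $K[x_1]$ are monic, $\operatorname{lcm}(a,b)=ab/\gcd(a,b)$. For $f,g\notin K[x_1]$, $S(f,g):=\frac{m\tilde{\bm{x}}^\gamma}{\operatorname{lt}(f)}f-\frac{m\tilde{\bm{x}}^\gamma}{\operatorname{lt}(g)}g$ with $m=\operatorname{lcm}(\operatorname{lc}f,\operatorname{lc}g)$, $\tilde{\bm{x}}^\gamma=\operatorname{lcm}(\operatorname{lm}f,\operatorname{lm}g)$. Pseudo-division of $S$ by a finite set $G\subset(K[x_1])[\tilde{\bm{x}}]\setminus K[x_1]$: starting with $h=S$, while $\operatorname{supp}h\cap\langle\operatorname{lm}(G)\rangle\neq\emptyset$, let $c_\alpha\tilde{\bm{x}}^\alpha$ be the term of $h$ whose monomial is the $\succ$-largest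 in this intersection, choose $b\in G$ with $\operatorname{lm}(b)\mid\tilde{\bm{x}}^\alpha$, put $m=\operatorname{lcm}(c_\alpha,\operatorname{lc}(b))$, $\mu=m/c_\alpha$ and replace $h$ by $\mu h-\frac{m\tilde{\bm{x}}^\alpha}{\operatorname{lt}(b)}b$. The final $h$ is the remainder $r$; the product $\lambda$ of the $\mu$'s is the multiplier. Algorithm. Input: finite $F\subset(K[x_1])[\tilde{\bm{x}}]\setminus K$. Initialize $G:=F\setminus K[x_1]$, $\Lambda:=\emptyset$, $\mathfrak{S}:=\emptyset$, and $f_0:=\gcd(F\cap K[x_1])$ if $F\cap K[x_1]\neq\emptyset$, else $f_0:=0$. Procedure $\mathcal{Q}(f,g)$ for $f\neq g$ in $G$: (i) if $\operatorname{lm}(f),\operatorname{lm}(g)$ are coprime, put $d=\gcd(\operatorname{lc}f,\operatorname{lc}g)$, add $d$ to $\Lambda$ if $d\notin K$, and do not form $S(f,g)$; (ii) else, if some $h\in G\setminus\{f,g\}$ has $\operatorname{lm}(h)\mid\operatorname{lcm}(\operatorname{lm}f,\operatorname{lm}g)$ and the triple $\{f,g,h\}$ has not been used in this way before, put $\lambda=\operatorname{lc}(h)/\gcd(\operatorname{lcm}(\operatorname{lc}f,\operatorname{lc}g),\operatorname{lc}h)$, add $\lambda$ to $\Lambda$ if $\lambda\notin K$, and do not form $S(f,g)$; (iii) otherwise add $S(f,g)$ to $\mathfrak{S}$. Apply $\mathcal{Q}$ to all pairs of $G$. Then, while $\mathfrak{S}\neq\emptyset$: take $S\in\mathfrak{S}$,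 pseudo-divide it by the current $G$ obtaining $\lambda,r$; add $\lambda$ to $\Lambda$ if $\lambda\notin K$; if $r\notin K[x_1]$, add $r$ to $G$ and apply $\mathcal{Q}(f,r)$ for every $f\in G\setminus\{r\}$; if $r\in K[x_1]\setminus K$, set $f_0:=\gcd(r,f_0)$ (with $\gcd(r,0)=r$); if $r=0$ do nothing; then delete $S$ from $\mathfrak{S}$. At the end set $\chi_\varepsilon:=f_0$, $B_\varepsilon:=G$, and for every $f\in B_\varepsilon$, if $d:=\gcd(\operatorname{lc}(f),\chi_\varepsilon)\notin K$, add $d$ to $\Lambda$. Output $\chi_\varepsilon$ (pseudo-eliminant), $B_\varepsilon$ (pseudo-basis) and $\Lambda$ (multiplier set). All choices (order of processing, choice of $h$, of $b$) are arbitrary. *)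

From HB Require Import structures.
From mathcomp Require Import all_boot all_order all_algebra.
From mathcomp Require Import mpoly.
Set Implicit Arguments. Unset Strict Implicit. Unset Printing Implicit Defensive.
Import Order.TTheory GRing.Theory.
Local Open Scope ring_scope.

(* K[x_1,...,x_{n+1}] is modelled as (K[x_1])[x~] = {mpoly {poly K}[n]},
   x~ = (x_2,...,x_{n+1}) being the n variables of the mpoly. *)

Section PseudoEliminant.
Variable K : fieldType.
Variable n : nat.
(* the fixed monomial ordering (non-strict version of "succ") *)
Variable ord : rel 'X_{1..n}.

Local Notation P := {mpoly {poly K}[n]}.

Definition monomial_order : Prop :=
  [/\ reflexive ord, antisymmetric ord, transitive ord & total ord] /\
  (forall a b c : 'X_{1..n}, ord a b -> ord (a + c)%MM (b + c)%MM) /\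
  (forall m : 'X_{1..n}, ord 0%MM m).

(* the ord-largest element of a sequence of monomials (0 if empty) *)
Definition maxm (s : seq 'X_{1..n}) : 'X_{1..n} :=
  foldr (fun m acc => if ord m acc then acc else m) (head 0%MM s) s.

Definition lm (f : P) : 'X_{1..n} := maxm (msupp f).
Definition lc (f : P) : {poly K} := f@_(lm f).

Definition inK (p : {poly K}) : bool := (size p <= 1)%N.
Definition inKx1 (f : P) : bool := all (fun m => m == 0%MM) (msupp f).
Definition inKmp (f : P) : bool := inKx1 f && inK (f@_0%MM).

(* monic gcd in K[x_1] (gcd(0,0) = 0) *)
Definition mgcd (a b : {poly K}) : {poly K} :=
  (lead_coef (gcdp a b))^-1 *: gcdp a b.
Definition lcmp (a b : {poly K}) : {poly K} := (a * b) %/ mgcd a b.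

Definition Spol (f g : P) : P :=
  let m := lcmp (lc f) (lc g) in
  let ga := mlcm (lm f) (lm g) in
  (m %/ lc f) *: ('X_[(ga - lm f)%MM] * f)
  - (m %/ lc g) *: ('X_[(ga - lm g)%MM] * g).

Definition inLmIdeal (G : seq P) (m : 'X_{1..n}) : bool :=
  has (fun b => lem (lm b) m) G.

Definition reducible (G : seq P) (h : P) : seq 'X_{1..n} :=
  [seq m <- msupp h | inLmIdeal G m].

Definition pdiv_step (G : seq P) (h : P) (lam : {poly K})
    (h' : P) (lam' : {poly K}) : Prop :=
  reducible G h != [::] /\
  let a := maxm (reducible G h) in
  let c := h@_a in
  exists2 b, b \in G &
    lem (lm b) a /\
    let m := lcmp c (lc b) in
    let mu := m %/ c in
    h' = mu *: h - (m %/ lc b) *: ('X_[(a - lm b)%MM] * b) /\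
    lam' = lam * mu.

Definition addL (x : {poly K}) (L : seq {poly K}) : seq {poly K} :=
  if inK x then L else x :: L.

Definition mcoprime (a b : 'X_{1..n}) : bool :=
  [forall i, (a i == 0%N) || (b i == 0%N)].

(* the procedure Q(f,g): (used, Lambda, S) ~> (used', Lambda', S') *)
Inductive Qproc (G : seq P) (f g : P) (used : seq (seq P))
    (Lam : seq {poly K}) (Ss : seq P) :
    seq (seq P) -> seq {poly K} -> seq P -> Prop :=
| Q_coprime : mcoprime (lm f) (lm g) ->
    Qproc G f g used Lam Ss used (addL (mgcd (lc f) (lc g)) Lam) Ss
| Q_triple h : ~~ mcoprime (lm f) (lm g) ->
    h \in G -> h != f -> h != g ->
    lem (lm h) (mlcm (lm f) (lm g)) ->
    ~~ has (fun t => perm_eq t [:: f; g; h]) used ->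
    Qproc G f g used Lam Ss ([:: f; g; h] :: used)
      (addL (lc h %/ mgcd (lcmp (lc f) (lc g)) (lc h)) Lam) Ss
| Q_spoly : ~~ mcoprime (lm f) (lm g) ->
    ~~ has (fun h => [&& h != f, h != g, lem (lm h) (mlcm (lm f) (lm g)) &
                        ~~ has (fun t => perm_eq t [:: f; g; h]) used]) G ->
    Qproc G f g used Lam Ss used Lam (Spol f g :: Ss).

Inductive phase : Type :=
| Main                                   (* applying Q / main while-loop *)
| Div of nat & P & {poly K}              (* pseudo-dividing the i-th element of S:
                                            current h and multiplier *)
| Final of seq P.                        (* final loop over B_eps, elements left *)

Record state : Type := State {
  stG : seq P;               (* G (B_eps in the final phase) *)
  stLam : seq {poly K};
  stS : seq P;
  stf0 : {poly K};           (* f_0 (chi_eps in the final phase) *)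
  stUsed : seq (seq P);      (* triples already used in Q(ii) *)
  stPending : seq (P * P);   (* pairs on which Q still has to be applied *)
  stPhase : phase }.

Fixpoint pairs (s : seq P) : seq (P * P) :=
  if s is x :: t then [seq (x, y) | y <- t] ++ pairs t else [::].

Definition init (F : seq P) : state :=
  let G0 := undup [seq f <- F | ~~ inKx1 f] in
  State G0 [::] [::] (foldr mgcd 0 [seq f@_0%MM | f <- F & inKx1 f])
        [::] (pairs G0) Main.

(* one step of a run of the algorithm; all arbitrary choices are
   nondeterministic *)
Inductive step : state -> state -> Prop :=
| step_Q G Lam Ss f0 used pend fg used' Lam' Ss' :
    fg \in pend ->
    Qproc G fg.1 fg.2 used Lam Ss used' Lam' Ss' ->
    step (State G Lam Ss f0 used pend Main)
         (State G Lam' Ss' f0 used' (rem fg pend) Main)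
| step_take G Lam Ss f0 used i :
    (i < size Ss)%N ->
    step (State G Lam Ss f0 used [::] Main)
         (State G Lam Ss f0 used [::] (Div i (nth 0 Ss i) 1))
| step_div G Lam Ss f0 used i h lam h' lam' :
    pdiv_step G h lam h' lam' ->
    step (State G Lam Ss f0 used [::] (Div i h lam))
         (State G Lam Ss f0 used [::] (Div i h' lam'))
| step_rem_new G Lam Ss f0 used i r lam :
    reducible G r = [::] -> ~~ inKx1 r ->
    step (State G Lam Ss f0 used [::] (Div i r lam))
         (State (rcons G r) (addL lam Lam) (take i Ss ++ drop i.+1 Ss) f0 used
                [seq (f, r) | f <- G & f != r] Main)
| step_rem_x1 G Lam Ss f0 used i r lam :
    reducible G r = [::] -> inKx1 r -> r != 0 ->
    step (State G Lam Ss f0 used [::] (Div i r lam))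
         (State G (addL lam Lam) (take i Ss ++ drop i.+1 Ss)
                (if f0 == 0 then r@_0%MM else mgcd (r@_0%MM) f0)
                used [::] Main)
| step_rem_0 G Lam Ss f0 used i lam :
    reducible G 0 = [::] ->
    step (State G Lam Ss f0 used [::] (Div i 0 lam))
         (State G (addL lam Lam) (take i Ss ++ drop i.+1 Ss) f0 used [::] Main)
| step_end G Lam f0 used :
    step (State G Lam [::] f0 used [::] Main)
         (State G Lam [::] f0 used [::] (Final G))
| step_final G Lam f0 used rest f :
    f \in rest ->
    step (State G Lam [::] f0 used [::] (Final rest))
         (State G (addL (mgcd (lc f) f0) Lam) [::] f0 used [::] (Final (rem f rest))).

Definition is_done (s : state) : Prop :=
  if stPhase s is Final [::] then True else False.

End PseudoEliminant.

From HB Require Import structures.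
From mathcomp Require Import all_boot all_order all_algebra.
From mathcomp Require Import mpoly.
From mathcomp Require Import zify.
From Stdlib Require Import Relations Classical ClassicalEpsilon.
Set Implicit Arguments. Unset Strict Implicit. Unset Printing Implicit Defensive.
Import Order.TTheory GRing.Theory.

(* Termination rests twice on Dickson's lemma.  The basis G only grows, by
   appending a remainder whose leading monomial is divisible by no earlier
   leading monomial, so G eventually stops growing.  From then on every step
   except a pseudo-division step decreases a natural-number potential, and a
   pseudo-division step strictly lowers, in the monomial order, the largest
   monomial of the current h that lies in <lm(G)>; no such descent is infinite.
   That no run gets stuck before the end follows from an invariant of the
   phases: in every reachable non-final state some step applies. *)

Lemma exists_argminn (u : nat -> nat) : exists k0, forall k, u k0 <= u k.
Proof.
suff below v k : u k = v -> exists k0, forall k, u k0 <= u k.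
  exact: (below _ 0 erefl).
elim/ltn_ind: v k => v IH k ukv.
case: (classic (exists k', u k' < u k)) => [[k' lt_k'k] | none].
  by apply: (IH (u k')) => //; rewrite -ukv.
exists k => k'; rewrite leqNgt; apply/negP => lt_k'k; apply: none; by exists k'.
Qed.

Lemma nonincreasing_eventually_constant (u : nat -> nat) :
  (forall k, u k.+1 <= u k) -> exists k0, forall k, k0 <= k -> u k = u k0.
Proof.
move=> u_step; have u_nhomo : {homo u : i j /~ i <= j}.
  move=> i j; apply: (@homo_leq _ u (fun x y => y <= x)) => // y x z le_yx le_zy.
  exact: leq_trans le_zy le_yx.
have [k0 k0_min] := exists_argminn u.
by exists k0 => k le_k0k; apply/eqP; rewrite eqn_leq k0_min u_nhomo.
Qed.

Lemma nondecreasing_subseq (g : nat -> nat) : exists phi : nat -> nat,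
  {homo phi : i j / i < j} /\ {homo g \o phi : i j / i < j >-> i <= j}.
Proof.
have tail_min m : exists j, m < j /\ forall k, m < k -> g j <= g k.
  have [i0 i0_min] := exists_argminn (fun i => g (i + m.+1)).
  exists (i0 + m.+1); split=> [|k lt_mk]; first by rewrite addnS ltnS leq_addl.
  by rewrite -(subnK lt_mk); apply: i0_min.
have [next next_spec] := choice _ tail_min.
pose phi k := iter k.+1 next 0.
have phiS k : phi k < phi k.+1 := (next_spec (phi k)).1.
exists phi; split; first exact: homo_ltn ltn_trans phiS.
apply: homo_ltn => [j i k|k]; first exact: leq_trans.
apply: (next_spec (iter k next 0)).2; exact: ltn_trans (next_spec _).1 (phiS k).
Qed.

Lemma simultaneous_nondecreasing_subseq (T : eqType) (I : seq T) (f : nat -> T -> nat) :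
  exists phi : nat -> nat, {homo phi : i j / i < j} /\
    forall t, t \in I -> {homo (fun k => f (phi k) t) : i j / i < j >-> i <= j}.
Proof.
elim: I => [|t I [phi [phi_incr phi_mono]]]; first by exists id; split=> // i j.
have [psi [psi_incr psi_mono]] := nondecreasing_subseq (fun k => f (phi k) t).
exists (phi \o psi); split=> [i j lt_ij | t']; first by apply/phi_incr/psi_incr.
rewrite inE => /predU1P [-> | t'I] i j lt_ij; first exact: psi_mono.
exact/phi_mono/psi_incr.
Qed.

Lemma dickson n (f : nat -> 'X_{1..n}) : exists i j, i < j /\ (f i <= f j)%MM.
Proof.
have [phi [phi_incr phi_mono]] :=
  simultaneous_nondecreasing_subseq (enum 'I_n) (fun k (t : 'I_n) => f k t).
exists (phi 0), (phi 1); split; first exact: phi_incr.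
by apply/mnm_lepP => t; apply: phi_mono; rewrite ?mem_enum.
Qed.

Lemma prefix_nth (T : eqType) (x0 : T) s1 s2 i :
  prefix s1 s2 -> i < size s1 -> nth x0 s1 i = nth x0 s2 i.
Proof. by case/prefixP=> s3 -> lt_i; rewrite nth_cat lt_i. Qed.

Lemma prefix_size_eq (T : eqType) (s1 s2 : seq T) :
  prefix s1 s2 -> size s1 = size s2 -> s1 = s2.
Proof.
case/prefixP=> s3 ->; rewrite size_cat => /eqP.
by rewrite -{1}[size s1]addn0 eqn_add2l eq_sym size_eq0 => /eqP ->; rewrite cats0.
Qed.

Local Open Scope ring_scope.

Section MonicGcd.
Variable K : fieldType.
Implicit Types a b : {poly K}.

Lemma mgcd_eqp a b : mgcd a b %= gcdp a b.
Proof.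
rewrite /mgcd; have [-> | nz_g] := eqVneq (gcdp a b) 0; first by rewrite scaler0 eqpxx.
by rewrite eqp_scale // invr_eq0 lead_coef_eq0.
Qed.

Lemma dvdp_lcmpl a b : a %| lcmp a b.
Proof.
by rewrite /lcmp -divp_mulA ?dvdp_mulIl // (eqp_dvdl _ (mgcd_eqp a b)) dvdp_gcdr.
Qed.

Lemma dvdp_lcmpr a b : b %| lcmp a b.
Proof.
by rewrite /lcmp mulrC -divp_mulA ?dvdp_mulIl // (eqp_dvdl _ (mgcd_eqp a b)) dvdp_gcdl.
Qed.

End MonicGcd.

Section PseudoEliminant.
Variables (K : fieldType) (n : nat) (ord : rel 'X_{1..n}).
Local Notation P := {mpoly {poly K}[n]}.

Lemma maxm_in (s : seq 'X_{1..n}) : s != [::] -> maxm ord s \in s.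
Proof.
case: s => [//|m s] _.
set pick := fun m acc => if ord m acc then acc else m.
have max_in a t : foldr pick a t \in a :: t.
  elim: t => [|x t IH] /=; first exact: mem_head.
  rewrite {1}/pick; case: ifP => _; last by rewrite !inE eqxx orbT.
  by move: IH; rewrite !inE => /orP [->|->]; rewrite ?orbT.
by have := max_in m (m :: s); rewrite [in X in X -> _]inE orbA orbb.
Qed.

Hypothesis ord_monomial : monomial_order ord.

Let ord_refl : ssrbool.reflexive ord. Proof. by case: ord_monomial => [[]]. Qed.
Let ord_anti : ssrbool.antisymmetric ord. Proof. by case: ord_monomial => [[]]. Qed.
Let ord_trans : ssrbool.transitive ord. Proof. by case: ord_monomial => [[]]. Qed.
Let ord_total : total ord. Proof. by case: ord_monomial => [[]]. Qed.
Let ord_addr a b c : ord a b -> ord (a + c)%MM (b + c)%MM.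
Proof. by case: ord_monomial => _ [ord_add _]; apply: ord_add. Qed.

Lemma maxm_max (s : seq 'X_{1..n}) x : x \in s -> ord x (maxm ord s).
Proof.
rewrite /maxm; move: (head 0%MM s) => a; elim: s => [//|y s IH] /=.
set r := foldr _ a s in IH *.
case: ifP => [le_yr | /negbT nle_yr] /predU1P [-> | xs] //; first exact: IH.
apply: ord_trans (IH xs) _.
by case/orP: (ord_total y r) => //; rewrite (negbTE nle_yr).
Qed.

Lemma lem_ord a b : (a <= b)%MM -> ord a b.
Proof.
move=> le_ab; rewrite -(submK le_ab) -{1}(add0m a); apply: ord_addr.
by case: ord_monomial => _ [].
Qed.

Lemma ord_no_descending_chain (a : nat -> 'X_{1..n}) :
  ~ (forall k, a k.+1 != a k /\ ord (a k.+1) (a k)).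
Proof.
move=> desc.
have chain : {homo a : i j / (i < j)%N >-> j != i /\ ord j i}.
  apply: homo_ltn => [y x z [ne_yx le_yx] [_ le_zy] | k]; last exact: desc.
  split; last exact: ord_trans le_zy le_yx.
  by apply: contra_neq ne_yx => eq_zx; apply: ord_anti; rewrite le_yx -eq_zx le_zy.
have [i [j [lt_ij le_ij]]] := dickson a.
have [ne_ji le_ji] := chain _ _ lt_ij.
by move/eqP: ne_ji; apply; apply: ord_anti; rewrite le_ji lem_ord.
Qed.

Lemma msuppMX_ord (b : P) d m : m \in msupp ('X_[d] * b) -> ord m (d + lm ord b)%MM.
Proof.
rewrite mulrC (perm_mem (msuppMX b d)) => /mapP [m' m'b ->].
by rewrite addmC [X in ord _ X]addmC; apply: ord_addr; apply: maxm_max.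
Qed.

Lemma mcoeff_reduct_above (h b : P) a c1 c2 m :
  (lm ord b <= a)%MM -> ord a m -> m != a ->
  (c1 *: h - c2 *: ('X_[a - lm ord b] * b))@_m = c1 * h@_m.
Proof.
move=> le_ba le_am ne_ma; rewrite mcoeffB !mcoeffZ.
suff -> : ('X_[a - lm ord b] * b)@_m = 0 by rewrite mulr0 subr0.
apply/eqP; rewrite mcoeff_eq0; apply: contra ne_ma => /msuppMX_ord.
by rewrite submK // => le_ma; apply/eqP/ord_anti; rewrite le_ma le_am.
Qed.

Lemma mcoeff_reduct_at (h b : P) a c1 c2 : (lm ord b <= a)%MM ->
  (c1 *: h - c2 *: ('X_[a - lm ord b] * b))@_a = c1 * h@_a - c2 * lc ord b.
Proof.
move=> le_ba; rewrite mcoeffB !mcoeffZ; congr (_ - _ * _).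
by rewrite mulrC -[X in _@_X](submK le_ba) mcoeffMX.
Qed.

Definition pivot (G : seq P) (h : P) : 'X_{1..n} := maxm ord (reducible ord G h).

Lemma pdiv_step_pivot_lt G h lam h' lam' :
  pdiv_step ord G h lam h' lam' -> reducible ord G h' != [::] ->
  pivot G h' != pivot G h /\ ord (pivot G h') (pivot G h).
Proof.
case=> _; rewrite -/(pivot G h); set a := pivot G h.
case=> b _ [le_ba [h'_def _]] red_h'; set a' := pivot G h'.
have /[!mem_filter] /andP [a'_ideal a'_supp] : a' \in reducible ord G h' by apply: maxm_in.
have coef_a : h'@_a = 0.
  by rewrite h'_def mcoeff_reduct_at // !divpK ?dvdp_lcmpl ?dvdp_lcmpr ?subrr.
have ne_a'a : a' != a by apply: contraTneq a'_supp => ->; rewrite mcoeff_msupp coef_a eqxx.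
split=> //; case/orP: (ord_total a' a) => // le_aa'; apply: maxm_max.
rewrite mem_filter a'_ideal mcoeff_msupp; apply: contraTneq a'_supp => coef_h.
by rewrite mcoeff_msupp h'_def mcoeff_reduct_above // coef_h mulr0 eqxx.
Qed.

Definition state_inv (s : state K n) : Prop :=
  match stPhase s with
  | Main => True
  | Div i _ _ => (i < size (stS s))%N /\ stPending s = [::]
  | Final _ => stPending s = [::] /\ stS s = [::]
  end.

Lemma step_state_inv s s' : step ord s s' -> state_inv s -> state_inv s'.
Proof. by case. Qed.

Lemma reachable_state_inv s s' :
  clos_refl_trans _ (step ord) s s' -> state_inv s -> state_inv s'.
Proof. by elim=> [x y /step_state_inv | | x y z _ IHxy _ IHyz] // /IHxy. Qed.

Lemma Qproc_total (G : seq P) f g used Lam Ss :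
  exists used' Lam' Ss', Qproc ord G f g used Lam Ss used' Lam' Ss'.
Proof.
have [coprime_fg | not_coprime] := boolP (mcoprime (lm ord f) (lm ord g)).
  by do 3 eexists; apply: Q_coprime.
pose triple_candidate h := [&& h != f, h != g, lem (lm ord h) (mlcm (lm ord f) (lm ord g))
  & ~~ has (fun t => perm_eq t [:: f; g; h]) used].
have [/hasP [h hG /and4P [ne_hf ne_hg le_h unused]] | no_h] := boolP (has triple_candidate G).
  by do 3 eexists; apply: Q_triple hG ne_hf ne_hg le_h unused.
by do 3 eexists; apply: Q_spoly.
Qed.

Lemma step_progress s : state_inv s -> is_done s \/ exists s', step ord s s'.
Proof.
case: s => G Lam Ss f0 used pend [|i h lam|[|f rest]]; rewrite /state_inv /is_done /=.
- move=> _; right; case: pend => [|fg pend].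
    case: Ss => [|S1 Ss]; eexists; first exact: step_end.
    by apply: step_take; apply: ltn0Sn.
  have [used' [Lam' [Ss' Q]]] := Qproc_total G fg.1 fg.2 used Lam Ss.
  by eexists; apply: step_Q Q; apply: mem_head.
- case=> _ ->; right; have [irred | red] := eqVneq (reducible ord G h) [::].
    have [h0 | nz_h] := eqVneq h 0; first by subst h; eexists; apply: step_rem_0.
    have [x1_h | nx1_h] := boolP (inKx1 h); eexists.
      exact: step_rem_x1.
    exact: step_rem_new.
  have /[!mem_filter] /andP [/hasP [b bG le_ba] _] := maxm_in red.
  by eexists; apply: step_div; split=> //; exists b.
- by left.
- by case=> -> ->; right; eexists; apply: step_final (mem_head _ _).
Qed.

Lemma step_stG s s' : step ord s s' -> stG s' = stG s \/
  exists2 r : P, stG s' = rcons (stG s) r &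
    forall g, g \in stG s -> ~~ (lm ord g <= lm ord r)%MM.
Proof.
case=> [*|*|*| G Lam Ss f0 used i r lam irred_r nx1_r |*|*|*|*]; try by left.
right; exists r => // g gG.
have nz_r : r != 0 by apply: contraNneq nx1_r => ->; rewrite /inKx1 msupp0.
have lm_r : lm ord r \in msupp r by apply: maxm_in; rewrite msupp_eq0.
have : lm ord r \notin reducible ord G r by rewrite irred_r.
by rewrite mem_filter lm_r andbT => /hasPn; apply.
Qed.

(* A Q-step trades a pending pair (weight 3) for at most one S-polynomial
   (weight 2); ending a division drops an S-polynomial and returns to Main
   (net -1); entering Final trades the Main bonus for a loop of size G. *)
Definition potential (s : state K n) : nat :=
  (let weight := size (stG s) + 3 * size (stPending s) + 2 * size (stS s) in
   match stPhase s with
   | Main => weight.+1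
   | Div _ _ _ => weight
   | Final rest => size rest
   end)%N.

Definition pdiv_phase_step (s s' : state K n) : Prop :=
  stG s' = stG s /\ exists i h lam h' lam',
    [/\ stPhase s = Div i h lam, stPhase s' = Div i h' lam'
       & pdiv_step ord (stG s) h lam h' lam'].

Lemma Qproc_size (G : seq P) f g used Lam Ss used' Lam' Ss' :
  Qproc ord G f g used Lam Ss used' Lam' Ss' -> (size Ss' <= (size Ss).+1)%N.
Proof. by case=> //= *; rewrite leqW. Qed.

Lemma step_potential s s' : step ord s s' -> stG s' = stG s -> state_inv s ->
  (potential s' < potential s)%N \/ potential s' = potential s /\ pdiv_phase_step s s'.
Proof.
case; rewrite /potential /state_inv /=.
- move=> G Lam Ss f0 used pend fg used' Lam' Ss' fg_pend /Qproc_size + _ _; left.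
  by rewrite size_rem //; case: pend fg_pend => //= *; lia.
- by move=> *; left; lia.
- move=> G Lam Ss f0 used i h lam h' lam' st _ _; right.
  by split=> //; split=> //; exists i, h, lam, h', lam'.
- by move=> G Lam Ss f0 used i r lam _ _ /(congr1 size); rewrite size_rcons; lia.
- move=> G Lam Ss f0 used i r lam _ _ _ _ [lt_i _]; left.
  by rewrite size_cat size_take size_drop lt_i; lia.
- move=> G Lam Ss f0 used i lam _ _ [lt_i _]; left.
  by rewrite size_cat size_take size_drop lt_i; lia.
- by move=> *; left; lia.
- by move=> G Lam f0 used rest f f_rest _ _; left; rewrite size_rem //; case: rest f_rest.
Qed.

Definition state_pivot (s : state K n) : 'X_{1..n} :=
  if stPhase s is Div _ h _ then pivot (stG s) h else 0%MM.

Lemma pdiv_phase_step_pivot_lt s s' s'' :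
  pdiv_phase_step s s' -> pdiv_phase_step s' s'' ->
  state_pivot s' != state_pivot s /\ ord (state_pivot s') (state_pivot s).
Proof.
case=> eqG [i [h [lam [h' [lam' [ph ph' st]]]]]].
case=> _ [i2 [h2 [lam2 [h2' [lam2' [ph2 _ [red_h2 _]]]]]]].
move: ph2 red_h2; rewrite ph' => -[_ <- _]; rewrite /state_pivot ph ph' eqG.
exact: pdiv_step_pivot_lt st.
Qed.

Section InfiniteRun.
Variable run : nat -> state K n.
Hypothesis run_step : forall k, step ord (run k) (run k.+1).
Hypothesis run_inv0 : state_inv (run 0).

Local Notation G k := (stG (run k)).

Lemma run_state_inv k : state_inv (run k).
Proof. by elim: k => // k; apply: step_state_inv. Qed.

Lemma run_G_prefix k k' : (k <= k')%N -> prefix (G k) (G k').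
Proof.
move/subnKC <-; elim: (k' - k)%N => [|d IH]; first by rewrite addn0 prefix_refl.
rewrite addnS; apply: prefix_trans IH _.
case: (step_stG (run_step (k + d))) => [-> | [r -> _]].
  exact: prefix_refl.
exact: prefix_rcons.
Qed.

Lemma run_G_antichain k i j : (i < j < size (G k))%N -> (size (G 0) <= j)%N ->
  ~~ (lm ord (G k)`_i <= lm ord (G k)`_j)%MM.
Proof.
elim: k i j => [|k IH] i j /andP [lt_ij lt_j]; first by rewrite leqNgt lt_j.
case: (step_stG (run_step k)) => [eqG | [r eqG r_new]]; rewrite eqG in lt_j *.
  by move=> le_0j; apply: IH; rewrite ?lt_ij.
move: lt_j; rewrite size_rcons ltnS leq_eqVlt => /predU1P [eq_j | lt_j] le_0j.
  by subst j; rewrite !nth_rcons lt_ij ltnn eqxx; apply/r_new/mem_nth.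
by rewrite !nth_rcons lt_j (ltn_trans lt_ij lt_j); apply: IH; rewrite ?lt_ij.
Qed.

Lemma run_G_bounded : exists B, forall k, (size (G k) <= B)%N.
Proof.
apply: NNPP => unbounded.
have grows j : exists k, (j < size (G k))%N.
  apply: NNPP => none; apply: unbounded; exists j => k.
  by rewrite leqNgt; apply/negP => lt_j; apply: none; exists k.
pose g j := (G (xchoose (grows j)))`_j.
have gE k j : (j < size (G k))%N -> (G k)`_j = g j.
  move=> lt_j; have := xchooseP (grows j); rewrite /g; set k' := xchoose _ => lt_j'.
  by case/orP: (leq_total k k') => /run_G_prefix pre; rewrite (prefix_nth _ pre).
set s0 := size (G 0).
have [i [j [lt_ij]]] := dickson (fun j => lm ord (g (j + s0)%N)).
set k := xchoose (grows (j + s0)%N).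
have lt_jk : (j + s0 < size (G k))%N := xchooseP (grows _).
have lt_ijs : (i + s0 < j + s0)%N by rewrite ltn_add2r.
rewrite /= -!(gE k) ?(ltn_trans lt_ijs) //; apply/negP; apply: run_G_antichain.
  by rewrite lt_ijs.
exact: leq_addl.
Qed.

Lemma run_G_eventually_constant : exists k0, forall k, (k0 <= k)%N -> G k = G k0.
Proof.
have [B G_bounded] := run_G_bounded.
have gap_step k : (B - size (G k.+1) <= B - size (G k))%N.
  by rewrite leq_sub2l // size_prefix // run_G_prefix.
have [k0 gap_const] := nonincreasing_eventually_constant gap_step.
exists k0 => k le_k0k; symmetry; apply: prefix_size_eq (run_G_prefix le_k0k) _.
by have /= := gap_const k le_k0k; have := G_bounded k; have := G_bounded k0; lia.
Qed.

Lemma run_eventually_pdiv :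
  exists k1, forall k, (k1 <= k)%N -> pdiv_phase_step (run k) (run k.+1).
Proof.
have [k0 G_const] := run_G_eventually_constant.
have potential_step k : (k0 <= k)%N ->
    (potential (run k.+1) < potential (run k))%N \/
    potential (run k.+1) = potential (run k) /\ pdiv_phase_step (run k) (run k.+1).
  move=> le_k0k; apply: step_potential (run_step k) _ (run_state_inv k).
  by rewrite !G_const // leqW.
have potential_decr k : (potential (run (k0 + k.+1)) <= potential (run (k0 + k)))%N.
  by rewrite addnS; case: (potential_step _ (leq_addr k k0)) => [/ltnW | [-> _]].
have [k1 potential_const] := nonincreasing_eventually_constant potential_decr.
exists (k0 + k1)%N => k le_k; have le_k0k : (k0 <= k)%N by lia.
case: (potential_step k le_k0k) => [| [] //].
have le_k1 : (k1 <= k - k0)%N by lia.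
have := potential_const _ (leqW le_k1); have := potential_const _ le_k1.
by rewrite /= addnS subnKC // => -> ->; rewrite ltnn.
Qed.

Lemma infinite_run_absurd : False.
Proof.
have [k1 pdiv] := run_eventually_pdiv.
apply: (@ord_no_descending_chain (fun j => state_pivot (run (k1 + j)))) => j.
rewrite addnS; apply: pdiv_phase_step_pivot_lt; apply: pdiv; first exact: leq_addr.
by rewrite -addnS leq_addr.
Qed.

End InfiniteRun.

End PseudoEliminant.

Theorem lemma3p8 (K : fieldType) (n : nat) (ord : rel 'X_{1..n})
    (Hord : monomial_order ord) (F : seq {mpoly {poly K}[n]})
    (HF : forall f, f \in F -> ~~ inKmp f) :
  (* no infinite run *)
  ~ (exists run : nat -> state K n,
       run 0%N = init F /\ forall k, step ord (run k) (run k.+1)) /\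
  (* every run that cannot continue has reached the end of the algorithm *)
  (forall s, clos_refl_trans _ (step ord) (init F) s ->
     (forall s', ~ step ord s s') -> is_done s).
Proof.
split.
  case=> run [run0 run_step].
  by apply: (infinite_run_absurd Hord run_step); rewrite run0.
move=> s reachable stuck.
have [// | [s' st]] := step_progress ord (reachable_state_inv reachable I).
by case: (stuck s' st).
Qed.
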